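(* Let $G$ be an arbitrary group and let $S=\bigoplus_{g\in G}S_g$ be an epsilon-strongly $G$-graded ring with principal component $R=S_e$. If $\mathrm{Supp}(S)$ is finite, then $S$ is finitely generated both as a left $R$-module and as a right $R$-module.
   Context: All rings are associative with multiplicative identity $1\neq 0$. A ring $S$ is $G$-graded if $S=\bigoplus_{g\in G}S_g$ for additive subgroups $S_g$ with $S_gS_h\subseteq S_{gh}$ for all $g,h\in G$; $S_e$ is the principal component, and $\mathrm{Supp}(S)=\{g\in G: S_g\neq\{0\}\}$. $S$ is epsilon-strongly $G$-graded if (a) $S_gS_{g^{-1}}S_g=S_g$ for all $g\in G$, and (b) for each $g\in G$ the ideal $S_gS_{g^{-1}}$ of $S_e$ has a multiplicative identity. *)

From HB Require Import structures.
From mathcomp Require Import all_boot all_order all_algebra.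
Set Implicit Arguments. Unset Strict Implicit. Unset Printing Implicit Defensive.
Import GRing.Theory.
Local Open Scope ring_scope.

Record group := Group {
  gcar :> Type;
  gmul : gcar -> gcar -> gcar;
  ginv : gcar -> gcar;
  gid : gcar;
  gmulA : forall x y z, gmul x (gmul y z) = gmul (gmul x y) z;
  gmul1g : forall x, gmul gid x = x;
  gmulg1 : forall x, gmul x gid = x;
  gmulVg : forall x, gmul (ginv x) x = gid;
  gmulgV : forall x, gmul x (ginv x) = gid
}.

Section Graded.
Variables (G : group) (S : nzRingType).

Definition additive_subgroup (A : S -> Prop) : Prop :=
  A 0 /\ (forall x y, A x -> A y -> A (x - y)).

Definition setmul (A B : S -> Prop) : S -> Prop :=
  fun s => exists n (a b : 'I_n -> S),
    (forall i, A (a i) /\ B (b i)) /\ s = \sum_(i < n) a i * b i.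

Definition is_graded (Sg : G -> S -> Prop) : Prop :=
  [/\ (forall g, additive_subgroup (Sg g)),
      (forall s, exists n (gs : 'I_n -> G) (x : 'I_n -> S),
          injective gs /\ (forall i, Sg (gs i) (x i)) /\ s = \sum_(i < n) x i),
      (forall n (gs : 'I_n -> G) (x : 'I_n -> S),
          injective gs -> (forall i, Sg (gs i) (x i)) ->
          \sum_(i < n) x i = 0 -> forall i, x i = 0)
    & (forall g h x y, Sg g x -> Sg h y -> Sg (gmul g h) (x * y))].

Definition epsilon_strongly_graded (Sg : G -> S -> Prop) : Prop :=
  is_graded Sg /\
  (forall g, forall s, setmul (setmul (Sg g) (Sg (ginv g))) (Sg g) s <-> Sg g s) /\
  (forall g, exists eps, setmul (Sg g) (Sg (ginv g)) eps /\
      forall x, setmul (Sg g) (Sg (ginv g)) x -> eps * x = x /\ x * eps = x).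

Definition finite_support (Sg : G -> S -> Prop) : Prop :=
  exists n (gs : 'I_n -> G), forall g, (exists x, Sg g x /\ x <> 0) ->
    exists i, gs i = g.

Definition fg_left_module (R : S -> Prop) : Prop :=
  exists n (e : 'I_n -> S), forall s, exists r : 'I_n -> S,
    (forall i, R (r i)) /\ s = \sum_(i < n) r i * e i.

Definition fg_right_module (R : S -> Prop) : Prop :=
  exists n (e : 'I_n -> S), forall s, exists r : 'I_n -> S,
    (forall i, R (r i)) /\ s = \sum_(i < n) e i * r i.

End Graded.

From mathcomp Require Import all_boot all_order all_algebra.
Set Implicit Arguments. Unset Strict Implicit. Unset Printing Implicit Defensive.
Import GRing.Theory.
Local Open Scope ring_scope.

(* For x in S_g, condition (a) writes x as a sum of products p * c with
   p in S_g S_{g^-1} and c in S_g, so the unit eps_g of S_g S_{g^-1} fixes x on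
   the left, and the unit eps_{g^-1} of S_{g^-1} S_g fixes x on the right.
   Writing eps_{g^-1} = sum_i u_i v_i with u_i in S_{g^-1} and v_i in S_g gives
   x = sum_i (x u_i) v_i with x u_i in S_e, so each S_g is generated over S_e
   by the finitely many v_i; symmetrically on the right using eps_g.  As S is
   the sum of the finitely many nonzero components, the generators of all these
   components together generate S.  The right-module statement is the
   left-module statement for the opposite ring S^c. *)

Definition catf (T : Type) m n (e : 'I_m -> T) (f : 'I_n -> T)
    (i : 'I_(m + n)) : T :=
  match split i with inl a => e a | inr b => f b end.

Lemma catf_lshift (T : Type) m n (e : 'I_m -> T) (f : 'I_n -> T) i :
  catf e f (lshift n i) = e i.
Proof. by rewrite /catf (unsplitK (inl i)). Qed.

Lemma catf_rshift (T : Type) m n (e : 'I_m -> T) (f : 'I_n -> T) i :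
  catf e f (rshift m i) = f i.
Proof. by rewrite /catf (unsplitK (inr i)). Qed.

Section LeftSpan.
Variables (S : nzRingType) (R : S -> Prop).
Hypotheses (R0 : R 0) (RD : forall a b, R a -> R b -> R (a + b)).

Definition lspan n (e : 'I_n -> S) (x : S) :=
  exists r : 'I_n -> S, (forall i, R (r i)) /\ x = \sum_(i < n) r i * e i.

Definition lspan_fg (A : S -> Prop) :=
  exists n (e : 'I_n -> S), forall x, A x -> lspan e x.

Lemma lspan0 n (e : 'I_n -> S) : lspan e 0.
Proof.
by exists (fun=> 0); split=> //; rewrite big1 // => i _; rewrite mul0r.
Qed.

Lemma lspanD n (e : 'I_n -> S) x y : lspan e x -> lspan e y -> lspan e (x + y).
Proof.
move=> [r [Rr ->]] [s [Rs ->]]; exists (fun i => r i + s i); split=> [i|].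
  exact: RD.
by rewrite -big_split; apply: eq_bigr => i _; rewrite mulrDl.
Qed.

Lemma lspan_sum n (e : 'I_n -> S) (I : Type) (r : seq I) (P : pred I) F :
  (forall i, P i -> lspan e (F i)) -> lspan e (\sum_(i <- r | P i) F i).
Proof. by apply: (big_ind (lspan e)); [exact: lspan0 | exact: lspanD]. Qed.

Lemma lspan_cat m n (e : 'I_m -> S) (f : 'I_n -> S) x y :
  lspan e x -> lspan f y -> lspan (catf e f) (x + y).
Proof.
move=> [r [Rr ->]] [s [Rs ->]]; exists (catf r s); split.
  by move=> i; rewrite /catf; case: split.
by rewrite big_split_ord; congr (_ + _); apply: eq_bigr => i _;
  rewrite ?catf_lshift ?catf_rshift.
Qed.

Lemma lspan_fg_bigcup n (A : 'I_n -> S -> Prop) :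
  (forall j, lspan_fg (A j)) -> lspan_fg (fun x => exists j, A j x).
Proof.
elim: n A => [|n IHn] A fgA; first by exists 0%N, (fun=> 0) => x [[]].
have [m [e Ae]] := fgA ord0.
have [k [f Af]] := IHn (fun j => A (lift ord0 j)) (fun j => fgA _).
exists (m + k)%N, (catf e f) => x [j]; case: (unliftP ord0 j) => [j'|] -> Ax.
  by rewrite -[x]add0r; apply: lspan_cat (lspan0 e) (Af x _); exists j'.
by rewrite -[x]addr0; apply: lspan_cat (Ae x Ax) (lspan0 f).
Qed.

Lemma fg_left_module_of_components (G : group) (Sg : G -> S -> Prop) :
  (forall s, exists n (gs : 'I_n -> G) (x : 'I_n -> S),
     (forall i, Sg (gs i) (x i)) /\ s = \sum_(i < n) x i) ->
  finite_support Sg -> (forall g, lspan_fg (Sg g)) -> fg_left_module R.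
Proof.
move=> Sdec [n [supp suppP]] fgSg.
have [m [e Se]] := lspan_fg_bigcup (fun j => fgSg (supp j)).
exists m, e => s; have [k [gs [x [Sx ->]]]] := Sdec s.
apply: lspan_sum => i _; have [->|xi_neq0] := eqVneq (x i) 0.
  exact: lspan0.
have [j supp_j] := suppP (gs i)
  (ex_intro _ (x i) (conj (Sx i) (elimN eqP xi_neq0))).
by apply: Se; exists j; rewrite supp_j.
Qed.

End LeftSpan.

Lemma additive_subgroup0 (S : nzRingType) (A : S -> Prop) :
  additive_subgroup A -> A 0.
Proof. by case. Qed.

Lemma additive_subgroupD (S : nzRingType) (A : S -> Prop) :
  additive_subgroup A -> forall x y, A x -> A y -> A (x + y).
Proof.
move=> [A0 AB] x y Ax Ay; rewrite -[y]opprK -[- y]sub0r.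
by apply: (AB) => //; apply: AB.
Qed.

Lemma setmul_mul (S : nzRingType) (A B : S -> Prop) a b :
  A a -> B b -> setmul A B (a * b).
Proof. by move=> Aa Bb; exists 1%N, (fun=> a), (fun=> b); rewrite big_ord1. Qed.

Lemma setmul_ind (S : nzRingType) (A B P : S -> Prop) :
  P 0 -> (forall x y, P x -> P y -> P (x + y)) ->
  (forall a b, A a -> B b -> P (a * b)) -> forall s, setmul A B s -> P s.
Proof.
move=> P0 PD Pab s [n [a [b [ABab ->]]]].
by apply: (big_ind P) => // i _; have [] := ABab i; apply: Pab.
Qed.

Lemma ginvK (G : group) (g : G) : ginv (ginv g) = g.
Proof. by rewrite -[LHS]gmulg1 -(gmulVg g) gmulA gmulVg gmul1g. Qed.

Section EpsilonStrong.
Variables (G : group) (S : nzRingType) (Sg : G -> S -> Prop).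
Hypothesis Smul : forall g h x y, Sg g x -> Sg h y -> Sg (gmul g h) (x * y).
Hypothesis Sa :
  forall g s, setmul (setmul (Sg g) (Sg (ginv g))) (Sg g) s <-> Sg g s.
Hypothesis Sb : forall g, exists eps, setmul (Sg g) (Sg (ginv g)) eps /\
  forall x, setmul (Sg g) (Sg (ginv g)) x -> eps * x = x /\ x * eps = x.

Lemma unit_mul_component g eps :
  (forall p, setmul (Sg g) (Sg (ginv g)) p -> eps * p = p) ->
  forall x, Sg g x -> eps * x = x.
Proof.
move=> epsP x /Sa.
apply: (setmul_ind (P := fun y => eps * y = y)) => [|y z Py Pz|p c Sp _].
- by rewrite mulr0.
- by rewrite mulrDr Py Pz.
- by rewrite mulrA epsP.
Qed.

Lemma component_mul_unit g eps :
  (forall p, setmul (Sg (ginv g)) (Sg g) p -> p * eps = p) ->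
  forall x, Sg g x -> x * eps = x.
Proof.
move=> epsP x /Sa.
apply: (setmul_ind (P := fun y => y * eps = y)) => [|y z Py Pz|p c + Sc].
- by rewrite mul0r.
- by rewrite mulrDl Py Pz.
apply: (setmul_ind (P := fun y => y * c * eps = y * c))
  => [|y z Py Pz|a b _ Sginv_b].
- by rewrite !mul0r.
- by rewrite !mulrDl Py Pz.
- by rewrite -!mulrA [b * (c * eps)]mulrA epsP //; apply: setmul_mul.
Qed.

Lemma component_lspan_fg g : lspan_fg (Sg (gid G)) (Sg g).
Proof.
have [eps []] := Sb (ginv g); rewrite ginvK => -[m [u [v [Suv ->]]]] epsP.
exists m, v => x Sx; exists (fun i => x * u i); split.
  by move=> i; rewrite -(gmulgV g); apply: Smul => //; case: (Suv i).
rewrite -{1}(component_mul_unit (fun p Sp => (epsP p Sp).2) Sx) mulr_sumr.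
by apply: eq_bigr => i _; rewrite mulrA.
Qed.

Lemma component_rspan_fg g : @lspan_fg S^c (Sg (gid G)) (Sg g).
Proof.
have [eps [[m [u [v [Suv epsE]]]] epsP]] := Sb g.
exists m, u => x Sx; exists (fun i => v i * x : S); split.
  by move=> i; rewrite -(gmulVg g); apply: Smul => //; case: (Suv i).
rewrite -{1}(unit_mul_component (fun p Sp => (epsP p Sp).1) Sx) epsE mulr_suml.
by apply: eq_bigr => i _; rewrite -mulrA.
Qed.

End EpsilonStrong.

Theorem proposition3p3 (G : group) (S : nzRingType) (Sg : G -> S -> Prop) :
  epsilon_strongly_graded Sg -> finite_support Sg ->
  fg_left_module (Sg (gid G)) /\ fg_right_module (Sg (gid G)).
Proof.
move=> [[Sadd Sdec _ Smul] [Sa Sb]] supp.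
have R0 := additive_subgroup0 (Sadd (gid G)).
have RD := additive_subgroupD (Sadd (gid G)).
have Sdec' : forall s, exists n (gs : 'I_n -> G) (x : 'I_n -> S),
    (forall i, Sg (gs i) (x i)) /\ s = \sum_(i < n) x i.
  by move=> s; have [n [gs [x [_ Sx]]]] := Sdec s; exists n, gs, x.
split.
  exact: (fg_left_module_of_components R0 RD Sdec' supp
    (component_lspan_fg Smul Sa Sb)).
exact: (@fg_left_module_of_components S^c _ R0 RD _ _ Sdec' supp
  (component_rspan_fg Smul Sa Sb)).
Qed.
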